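(* Let $m\ge 1$ and let $A_1,\dots,A_m$ be states, with $A_{m+1}:=A_1$. Let $\varepsilon\ge 0$ with $m\varepsilon<1$. Then $$\sum_{i=1}^{m}W^{\varepsilon}(A_i\to A_{i+1})\ \le\ W^{m\varepsilon}(A_1\to A_1).$$ Moreover $W^0(A\to A)=0$ for every state $A$. Hence for $\varepsilon=0$ the left-hand side is at most $0$.
   Context: Conventions. The constants $k>0$ (Boltzmann's constant) and $T>0$ (temperature) are fixed. A state is a finite-level system with energies $E_1,\dots,E_d\in\mathbb{R}\cup\{+\infty\}$, not all $+\infty$, together with a diagonal density matrix $\rho=\sum_i\lambda_i|e_i\rangle\langle e_i|$. Equivalently, it is a probability vector $(\lambda_i)$ over the levels, and we require $\lambda_i=0$ whenever $E_i=+\infty$. Gibbs rescaling. $G^T(\rho)$ is the function on $[0,\infty)$ built as follows. Each level $i$ with $E_i<\infty$ is represented by a block: an interval of length $e^{-E_i/kT}$ on which the function takes the constant value $\lambda_i e^{E_i/kT}$, so the block has area $\lambda_i$. The blocks are placed consecutively starting at $0$, in order of nonincreasing height. The function is $0$ beyond $Z=\sum_{i:E_i<\infty}e^{-E_i/kT}$. Thus $G^T(\rho)$ is a nonincreasing probability density supported in $[0,Z]$. Relative mixedness. For nonincreasing integrable functions $f,g\ge 0$ on $[0,\infty)$, $$M(f\|g):=\max\Big\{m>0:\ \int_0^l f(x)\,dx\ge\int_0^{lm}g(x)\,dx\ \text{for all } l\ge 0\Big\}.$$ For $\varepsilon\in[0,1)$ define $$W^\varepsilon(\rho\to\sigma):=kT\ln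 M\big(G^T(\rho)/(1-\varepsilon)\,\big\|\,G^T(\sigma)\big).$$ *)

From Stdlib Require Import Reals List ClassicalEpsilon.
Import ListNotations.
Open Scope R_scope.

(* A level is a pair (E_i, lambda_i); E_i = None encodes E_i = +infinity.
   A state is a finite list of levels (a diagonal density matrix, i.e. a
   probability vector over the levels). *)
Definition level := (option R * R)%type.
Definition state := list level.

Definition is_state (rho : state) : Prop :=
  (forall p, In p rho -> 0 <= snd p) /\
  fold_right (fun p s => snd p + s) 0 rho = 1 /\
  (forall p, In p rho -> fst p = None -> snd p = 0) /\
  (exists p, In p rho /\ fst p <> None).

(* The block (width, height) of a level with finite energy. *)
Definition block (kB T : R) (lev : level) : list (R * R) :=
  match fst lev with
  | Some E => [(exp (- E / (kB * T)), snd lev * exp (E / (kB * T)))]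
  | None => []
  end.

Definition blocks (kB T : R) (rho : state) : list (R * R) :=
  flat_map (block kB T) rho.

Fixpoint ins (b : R * R) (l : list (R * R)) : list (R * R) :=
  match l with
  | [] => [b]
  | c :: l' => if Rle_dec (snd c) (snd b) then b :: c :: l' else c :: ins b l'
  end.

Fixpoint isort (l : list (R * R)) : list (R * R) :=
  match l with
  | [] => []
  | b :: l' => ins b (isort l')
  end.

Fixpoint place (bs : list (R * R)) (off x : R) : R :=
  match bs with
  | [] => 0
  | (w, h) :: bs' => if Rlt_dec x (off + w) then h else place bs' (off + w) x
  end.

Definition Gibbs (kB T : R) (rho : state) (x : R) : R :=
  if Rlt_dec x 0 then 0 else place (isort (blocks kB T rho)) 0 x.

Definition mix_ok (f g : R -> R) (m : R) : Prop :=
  0 < m /\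
  forall l, 0 <= l ->
    forall (pr1 : Riemann_integrable f 0 l) (pr2 : Riemann_integrable g 0 (l * m)),
      RiemannInt pr1 >= RiemannInt pr2.

Definition is_M (f g : R -> R) (m : R) : Prop :=
  mix_ok f g m /\ forall m', mix_ok f g m' -> m' <= m.

Definition M (f g : R -> R) : R := epsilon (inhabits 0) (is_M f g).

Definition W (kB T eps : R) (rho sigma : state) : R :=
  kB * T * ln (M (fun x => Gibbs kB T rho x / (1 - eps)) (Gibbs kB T sigma)).

(** For a density g write  cum g l = \int_0^l g.  For integrable densities,
    M(f || g) is the largest m > 0 that is "admissible" for the cumulative
    functions, i.e. with  cum g (l m) <= cum f l  for every l >= 0.

    W^0(A -> A) = 0 because
      the maximum for F = G is 1. *)

From Stdlib Require Import Reals Arith Lra Lia List Classical ClassicalEpsilon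
  FunctionalExtensionality.
From Coquelicot Require Import Coquelicot.
Import ListNotations.
Open Scope R_scope.

(** ** Integrals and cumulative functions *)

Lemma RInt_cst (c a b : R) : RInt (fun _ => c) a b = c * (b - a).
Proof. rewrite RInt_const. unfold scal; simpl; unfold mult; simpl. ring. Qed.

Lemma RInt_ext_le (f g : R -> R) (a b : R) :
  a <= b -> (forall x, a < x < b -> f x = g x) -> RInt f a b = RInt g a b.
Proof.
  intros Hab H. apply RInt_ext. intros x Hx.
  rewrite Rmin_left, Rmax_right in Hx by lra. now apply H.
Qed.

Lemma ex_RInt_ext_le (f g : R -> R) (a b : R) :
  a <= b -> (forall x, a < x < b -> f x = g x) -> ex_RInt f a b -> ex_RInt g a b.
Proof.
  intros Hab H. apply ex_RInt_ext. intros x Hx.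
  rewrite Rmin_left, Rmax_right in Hx by lra. now apply H.
Qed.

Lemma ex_RInt_glue (f : R -> R) (c : R) :
  (forall a b, a <= b <= c -> ex_RInt f a b) ->
  (forall a b, c <= a <= b -> ex_RInt f a b) ->
  forall a b, ex_RInt f a b.
Proof.
  intros Hleft Hright.
  assert (Hord : forall a b, a <= b -> ex_RInt f a b).
  { intros a b Hab.
    destruct (Rle_dec b c); [apply Hleft; lra|].
    destruct (Rle_dec c a); [apply Hright; lra|].
    apply ex_RInt_Chasles with c; [apply Hleft | apply Hright]; lra. }
  intros a b. destruct (Rle_dec a b); [now apply Hord|].
  apply ex_RInt_swap, Hord; lra.
Qed.

Definition cum (g : R -> R) (l : R) : R := RInt g 0 l.

Section Cumulative.
Variable g : R -> R.
Hypothesis g_int : forall a b, ex_RInt g a b.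

Lemma cum_0 : cum g 0 = 0.
Proof. unfold cum. now rewrite RInt_point. Qed.

Lemma cum_increment (x y : R) : cum g y - cum g x = RInt g x y.
Proof.
  unfold cum. rewrite <- (RInt_Chasles g 0 x y) by auto.
  unfold plus; simpl. ring.
Qed.

Lemma cum_increment_lower (c x y : R) :
  x <= y -> (forall z, x < z < y -> c <= g z) -> c * (y - x) <= cum g y - cum g x.
Proof.
  intros Hxy Hc. rewrite cum_increment, <- RInt_cst.
  apply RInt_le; auto. apply ex_RInt_const.
Qed.

Lemma cum_increment_upper (H x y : R) :
  x <= y -> (forall z, x < z < y -> g z <= H) -> cum g y - cum g x <= H * (y - x).
Proof.
  intros Hxy HH. rewrite cum_increment, <- RInt_cst.
  apply RInt_le; auto. apply ex_RInt_const.
Qed.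

Lemma ex_RInt_div (q a b : R) : ex_RInt (fun x => g x / q) a b.
Proof.
  apply ex_RInt_ext with (fun x => scal (/ q) (g x)).
  - intros x _. unfold scal; simpl; unfold mult; simpl. unfold Rdiv. ring.
  - apply (ex_RInt_scal (V := R_NormedModule)), g_int.
Qed.

Lemma cum_div (q : R) : cum (fun x => g x / q) = fun l => cum g l / q.
Proof.
  apply functional_extensionality. intros l. unfold cum.
  pose proof (RInt_scal (V := R_CompleteNormedModule) g 0 l (/ q) (g_int 0 l)) as E.
  unfold scal in E; simpl in E; unfold mult in E; simpl in E.
  unfold Rdiv. rewrite Rmult_comm, <- E. apply RInt_ext. intros x _. apply Rmult_comm.
Qed.

End Cumulative.

(** ** Admissible rescalings *)

Definition admissible (F G : R -> R) (m : R) : Prop :=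
  0 < m /\ forall l, 0 <= l -> G (l * m) <= F l.

Lemma mix_ok_admissible (f g : R -> R) (m : R) :
  (forall a b, ex_RInt f a b) -> (forall a b, ex_RInt g a b) ->
  mix_ok f g m <-> admissible (cum f) (cum g) m.
Proof.
  intros Hf Hg. unfold mix_ok, admissible, cum. split.
  - intros [Hm H]. split; auto. intros l Hl.
    specialize (H l Hl (ex_RInt_Reals_0 _ _ _ (Hf 0 l))
                  (ex_RInt_Reals_0 _ _ _ (Hg 0 (l * m)))).
    rewrite <- !RInt_Reals in H. lra.
  - intros [Hm H]. split; auto. intros l Hl pr1 pr2.
    rewrite <- !RInt_Reals. specialize (H l Hl). lra.
Qed.

Lemma admissible_weaken (F F' G : R -> R) (m : R) :
  (forall l, 0 <= l -> F l <= F' l) -> admissible F G m -> admissible F' G m.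
Proof.
  intros HF [Hm H]. split; auto. intros l Hl.
  apply Rle_trans with (F l); auto.
Qed.

Lemma admissible_div (F G : R -> R) (m t : R) :
  0 < t -> admissible F G m -> admissible (fun l => F l / t) (fun l => G l / t) m.
Proof.
  intros Ht [Hm H]. split; auto. intros l Hl.
  unfold Rdiv. apply Rmult_le_compat_r; auto.
  left; apply Rinv_0_lt_compat; lra.
Qed.

Lemma admissible_compose (F G H : R -> R) (m1 m2 : R) :
  admissible F G m1 -> admissible G H m2 -> admissible F H (m1 * m2).
Proof.
  intros [Hm1 H1] [Hm2 H2]. split; [nra|]. intros l Hl.
  rewrite <- Rmult_assoc. apply Rle_trans with (G (l * m1)); auto.
  apply H2. nra.
Qed.

Lemma admissible_chain (Q : nat -> R -> R) (ms : nat -> R) (s : R) (n : nat) :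
  0 < s ->
  (forall k, (k <= n)%nat -> admissible (fun l => Q k l / s) (Q (S k)) (ms k)) ->
  admissible (fun l => Q O l / s ^ S n) (Q (S n)) (prod_f_R0 ms n).
Proof.
  intros Hs Hstep. induction n as [|n IH].
  - apply admissible_weaken with (fun l => Q O l / s).
    + intros l _. rewrite pow_1. lra.
    + apply Hstep; lia.
  - simpl prod_f_R0.
    apply admissible_weaken with (fun l => Q O l / s ^ S n / s).
    { intros l _. replace (s ^ S (S n)) with (s ^ S n * s) by (simpl; ring).
      right. field. split; try apply pow_nonzero; lra. }
    apply admissible_compose with (G := fun l => Q (S n) l / s).
    + apply admissible_div; [exact Hs|]. apply IH. intros k Hk; apply Hstep; lia.
    + apply Hstep; lia.
Qed.

(** ** Profiles and the maximal admissible rescaling *)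

(* The abstract shape of the cumulative function of a Gibbs rescaling. *)
Record profile (P : R -> R) : Prop := {
  profile_0 : P 0 = 0;
  profile_lipschitz :
    exists H, 0 <= H /\ forall x y, 0 <= x <= y -> P y - P x <= H * (y - x);
  profile_mono : forall x y, 0 <= x <= y -> P x <= P y;
  profile_growth : exists c d, 0 < c /\ 0 < d /\
    forall x y, 0 <= x <= y -> y <= d -> c * (y - x) <= P y - P x;
  profile_le_1 : forall x, 0 <= x -> P x <= 1;
  profile_saturation : exists Z, 0 <= Z /\ forall x, Z <= x -> P x = 1 }.

Lemma profile_nonneg (P : R -> R) : profile P -> forall x, 0 <= x -> 0 <= P x.
Proof.
  intros HP x Hx. rewrite <- (profile_0 _ HP).
  apply (profile_mono _ HP); lra.
Qed.

Lemma profile_linear_upper (P : R -> R) :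
  profile P -> exists H, 0 <= H /\ forall x, 0 <= x -> P x <= H * x.
Proof.
  intros HP. destruct (profile_lipschitz _ HP) as [H [HH Hlip]].
  exists H. split; auto. intros x Hx.
  pose proof (Hlip 0 x ltac:(lra)) as Hx0. rewrite (profile_0 _ HP) in Hx0. lra.
Qed.

Definition linearly_bounded (F : R -> R) : Prop :=
  (exists L, forall l, 0 <= l -> F l <= L * l) /\
  (exists kappa Z, 0 < kappa /\ (forall l, 0 <= l <= Z -> kappa * l <= F l) /\
                   (forall l, Z <= l -> 1 <= F l)).

(* A profile divided by q in (0, 1] is linearly bounded: below the saturation
   point Z it stays above the chord from 0 to (d + Z, c d). *)
Lemma profile_div_linearly_bounded (P : R -> R) (q : R) :
  profile P -> 0 < q <= 1 -> linearly_bounded (fun l => P l / q).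
Proof.
  intros HP Hq.
  destruct (profile_linear_upper P HP) as [H [HH Hup]].
  destruct (profile_growth _ HP) as [c [d [Hc [Hd Hgrow]]]].
  destruct (profile_saturation _ HP) as [Z [HZ Hsat]].
  assert (Hdiv : forall l, 0 <= l -> P l <= P l / q).
  { intros l Hl. pose proof (profile_nonneg P HP l Hl).
    assert (E : P l / q - P l = P l * ((1 - q) / q)) by (field; lra).
    assert (0 <= P l * ((1 - q) / q)).
    { apply Rmult_le_pos; auto. apply Rdiv_le_0_compat; lra. }
    lra. }
  split.
  - exists (H / q). intros l Hl. unfold Rdiv.
    replace (H * / q * l) with (H * l * / q) by ring.
    apply Rmult_le_compat_r; auto. left; apply Rinv_0_lt_compat; lra.
  - exists (c * d / (d + Z)), Z. split; [apply Rdiv_lt_0_compat; nra|]. split.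
    + intros l Hl. apply Rle_trans with (P l); [|apply Hdiv; lra].
      assert (Hchord : c * d / (d + Z) * l = c * (d * l / (d + Z))) by (field; lra).
      rewrite Hchord.
      assert (HP0 := profile_0 _ HP).
      destruct (Rle_dec l d).
      * assert (c * (l - 0) <= P l - P 0) by (apply Hgrow; lra).
        assert (d * l / (d + Z) <= l).
        { apply Rmult_le_reg_r with (d + Z); [lra|].
          replace (d * l / (d + Z) * (d + Z)) with (d * l) by (field; lra). nra. }
        nra.
      * assert (c * (d - 0) <= P d - P 0) by (apply Hgrow; lra).
        assert (P d <= P l) by (apply (profile_mono _ HP); lra).
        assert (d * l / (d + Z) <= d).
        { apply Rmult_le_reg_r with (d + Z); [lra|].
          replace (d * l / (d + Z) * (d + Z)) with (d * l) by (field; lra). nra. }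
        nra.
    + intros l Hl. pose proof (Hdiv l ltac:(lra)). rewrite Hsat in * by lra. lra.
Qed.

Lemma profile_self_le_1 (P : R -> R) (m : R) : profile P -> admissible P P m -> m <= 1.
Proof.
  intros HP [Hm Hadm]. destruct (profile_growth _ HP) as [c [d [Hc [Hd Hgrow]]]].
  apply Rnot_lt_le. intros Hgt.
  assert (Hdm : d / m * m = d) by (field; lra).
  assert (Hl : 0 < d / m < d).
  { split; [apply Rdiv_lt_0_compat; lra|].
    apply Rmult_lt_reg_r with m; [lra|]. rewrite Hdm. nra. }
  specialize (Hadm (d / m) ltac:(lra)). rewrite Hdm in Hadm.
  pose proof (Hgrow (d / m) d ltac:(lra) ltac:(lra)).
  assert (0 < c * (d - d / m)) by (apply Rmult_lt_0_compat; lra). lra.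
Qed.

Lemma lub_approx (E : R -> Prop) (s eta : R) :
  is_lub E s -> 0 < eta -> exists x, E x /\ s - eta < x.
Proof.
  intros [_ Hleast] Heta. apply NNPP. intros Hno.
  assert (s <= s - eta); [|lra].
  apply Hleast. intros x Ex. apply Rnot_lt_le. intros Hlt. apply Hno. now exists x.
Qed.

Section MaximalAdmissible.
Variables F G : R -> R.
Hypothesis G_profile : profile G.
Hypothesis F_bounds : linearly_bounded F.

(* Small rescalings are admissible: G (l m) <= H l m <= kappa l <= F l before
   saturation, and G <= 1 <= F after. *)
Lemma admissible_exists : exists m, admissible F G m.
Proof.
  destruct F_bounds as [_ [kappa [Z [Hk [Hlow Hhigh]]]]].
  destruct (profile_linear_upper G G_profile) as [H [HH HGup]].
  assert (Hm : 0 < kappa / (H + 1)) by (apply Rdiv_lt_0_compat; lra).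
  exists (kappa / (H + 1)). split; auto. intros l Hl.
  destruct (Rle_dec l Z).
  - apply Rle_trans with (H * (l * (kappa / (H + 1)))); [apply HGup; nra|].
    apply Rle_trans with (kappa * l); [|apply Hlow; lra].
    replace (kappa * l) with ((H + 1) * (l * (kappa / (H + 1)))) by (field; lra).
    nra.
  - apply Rle_trans with 1; [apply (profile_le_1 _ G_profile); nra | apply Hhigh; lra].
Qed.

(* Admissible rescalings are bounded: testing at l = d / m gives c d <= L d / m. *)
Lemma admissible_bounded : exists B, forall m, admissible F G m -> m <= B.
Proof.
  destruct F_bounds as [[L HL] _].
  destruct (profile_growth _ G_profile) as [c [d [Hc [Hd Hgrow]]]].
  exists (L / c). intros m [Hm Hadm].
  assert (Gd : c * d <= G d).
  { pose proof (Hgrow 0 d ltac:(lra) ltac:(lra)) as H0. rewrite (profile_0 _ G_profile) in H0. lra. }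
  assert (Hl : 0 <= d / m) by (left; apply Rdiv_lt_0_compat; lra).
  specialize (Hadm (d / m) Hl). specialize (HL (d / m) Hl).
  replace (d / m * m) with d in Hadm by (field; lra).
  assert (Hcm : c * m <= L).
  { assert (c * d * m <= L * (d / m) * m) by (apply Rmult_le_compat_r; lra).
    replace (L * (d / m) * m) with (L * d) in H by (field; lra). nra. }
  apply Rmult_le_reg_r with c; [lra|].
  replace (L / c * c) with L by (field; lra). lra.
Qed.

(* The supremum of the admissible rescalings is admissible, by the Lipschitz
   continuity of G. *)
Lemma admissible_closed (s : R) : is_lub (admissible F G) s -> admissible F G s.
Proof.
  intros Hlub.
  destruct admissible_exists as [m0 Hm0].
  destruct (profile_lipschitz _ G_profile) as [H [HH Hlip]].
  split; [pose proof (proj1 Hlub m0 Hm0); destruct Hm0; lra|].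
  intros l Hl. apply Rle_plus_epsilon. intros eps Heps.
  set (eta := eps / (H * l + 1)).
  assert (HHl : 0 <= H * l) by nra.
  assert (Heta : 0 < eta) by (apply Rdiv_lt_0_compat; lra).
  assert (Heta_eps : (H * l + 1) * eta = eps) by (unfold eta; field; lra).
  destruct (lub_approx _ _ _ Hlub Heta) as [m [[Hm Hadm] Hclose]].
  assert (Hms : m <= s) by (apply (proj1 Hlub); split; auto).
  specialize (Hadm l Hl).
  assert (G (l * s) - G (l * m) <= H * (l * s - l * m)) by (apply Hlip; split; nra).
  assert (H * (l * s - l * m) <= eps) by nra.
  lra.
Qed.

Lemma admissible_max :
  exists s, admissible F G s /\ forall m, admissible F G m -> m <= s.
Proof.
  destruct (completeness (admissible F G)) as [s Hs].
  - destruct admissible_bounded as [B HB]. exists B. intros m Hm. now apply HB.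
  - exact admissible_exists.
  - exists s. split; [now apply admissible_closed | exact (proj1 Hs)].
Qed.

End MaximalAdmissible.

Lemma M_of_max (f g : R -> R) (s : R) :
  (forall a b, ex_RInt f a b) -> (forall a b, ex_RInt g a b) ->
  admissible (cum f) (cum g) s ->
  (forall m, admissible (cum f) (cum g) m -> m <= s) -> M f g = s.
Proof.
  intros Hf Hg Hs Hmax.
  assert (HisM : is_M f g s).
  { split; [now apply mix_ok_admissible|].
    intros m Hm. apply Hmax. now apply mix_ok_admissible. }
  destruct (epsilon_spec (inhabits 0) (is_M f g) (ex_intro _ s HisM)) as [Heps Hle].
  fold (M f g) in Heps, Hle.
  apply Rle_antisym; [apply Hmax; now apply mix_ok_admissible | apply Hle, HisM].
Qed.

(** ** Staircases of blocks *)

(* A staircase is a list of blocks (width, height), placed side by side. *)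
Definition area (bs : list (R * R)) : R := fold_right (fun b s => fst b * snd b + s) 0 bs.
Definition total_width (bs : list (R * R)) : R := fold_right (fun b s => fst b + s) 0 bs.
Definition height_sum (bs : list (R * R)) : R := fold_right (fun b s => snd b + s) 0 bs.

Definition wf_blocks (bs : list (R * R)) : Prop :=
  forall b, In b bs -> 0 < fst b /\ 0 <= snd b.

Lemma wf_blocks_cons (b : R * R) (bs : list (R * R)) :
  wf_blocks (b :: bs) -> wf_blocks bs /\ 0 < fst b /\ 0 <= snd b.
Proof. intros H. split; [intros c Hc; apply H; now right | apply H; now left]. Qed.

Lemma list_sum_nonneg (phi : R * R -> R) (bs : list (R * R)) :
  (forall b, In b bs -> 0 <= phi b) -> 0 <= fold_right (fun b s => phi b + s) 0 bs.
Proof.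
  induction bs as [|b bs IH]; simpl; intros H; [lra|].
  pose proof (H b (or_introl eq_refl)).
  pose proof (IH (fun c Hc => H c (or_intror Hc))). lra.
Qed.

Lemma area_nonneg (bs : list (R * R)) : wf_blocks bs -> 0 <= area bs.
Proof.
  intros H. apply (list_sum_nonneg (fun b => fst b * snd b)).
  intros b Hb. destruct (H b Hb). apply Rmult_le_pos; lra.
Qed.

Lemma total_width_nonneg (bs : list (R * R)) : wf_blocks bs -> 0 <= total_width bs.
Proof.
  intros H. apply (list_sum_nonneg fst). intros b Hb. destruct (H b Hb). lra.
Qed.

Lemma height_sum_nonneg (bs : list (R * R)) : wf_blocks bs -> 0 <= height_sum bs.
Proof.
  intros H. apply (list_sum_nonneg snd). intros b Hb. destruct (H b Hb). lra.
Qed.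

Lemma area_pos_block (bs : list (R * R)) :
  wf_blocks bs -> 0 < area bs -> exists b, In b bs /\ 0 < snd b.
Proof.
  induction bs as [|b bs IH]; simpl; intros Hwf Harea; [lra|].
  apply wf_blocks_cons in Hwf as [Hwf [Hw Hh]].
  destruct (Rlt_le_dec 0 (snd b)) as [Hpos|Hzero]; [exists b; auto|].
  assert (Hb0 : fst b * snd b = 0) by (replace (snd b) with 0 by lra; ring).
  destruct IH as [c [Hc Hcpos]]; [auto | fold (area bs) in Harea; lra|].
  exists c; auto.
Qed.

Lemma place_integrable (bs : list (R * R)) (off a b : R) : ex_RInt (place bs off) a b.
Proof.
  revert off a b. induction bs as [|[w h] bs IH]; intros off.
  - intros a b. apply ex_RInt_ext with (fun _ => 0); [reflexivity | apply ex_RInt_const].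
  - apply ex_RInt_glue with (off + w); intros a b Hab.
    + apply ex_RInt_ext_le with (fun _ => h); [lra | | apply ex_RInt_const].
      intros x Hx. simpl. destruct (Rlt_dec x (off + w)); [reflexivity | lra].
    + apply ex_RInt_ext_le with (place bs (off + w)); [lra | | apply IH].
      intros x Hx. simpl. destruct (Rlt_dec x (off + w)); [lra | reflexivity].
Qed.

Lemma place_bounds (bs : list (R * R)) (off x : R) :
  wf_blocks bs -> 0 <= place bs off x <= height_sum bs.
Proof.
  revert off. induction bs as [|[w h] bs IH]; simpl; intros off Hwf; [lra|].
  apply wf_blocks_cons in Hwf as [Hwf [Hw Hh]]. simpl in Hw, Hh.
  pose proof (height_sum_nonneg bs Hwf).
  destruct (Rlt_dec x (off + w)); [lra|].
  specialize (IH (off + w) Hwf). lra.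
Qed.

Lemma place_RInt (bs : list (R * R)) (off l : R) :
  wf_blocks bs -> off <= l ->
  RInt (place bs off) off l <= area bs /\
  (off + total_width bs <= l -> RInt (place bs off) off l = area bs).
Proof.
  revert off l. induction bs as [|[w h] bs IH]; intros off l Hwf Hl.
  - assert (E : RInt (place [] off) off l = 0).
    { rewrite (RInt_ext_le _ (fun _ => 0)) by (exact Hl || reflexivity).
      rewrite RInt_cst. apply Rmult_0_l. }
    rewrite E. simpl. lra.
  - apply wf_blocks_cons in Hwf as [Hwf [Hw Hh]]. simpl in Hw, Hh.
    change (area ((w, h) :: bs)) with (w * h + area bs).
    change (total_width ((w, h) :: bs)) with (w + total_width bs).
    pose proof (total_width_nonneg bs Hwf). pose proof (area_nonneg bs Hwf).
    assert (Hfirst : forall u, off <= u <= off + w ->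
              RInt (place ((w, h) :: bs) off) off u = h * (u - off)).
    { intros u Hu. rewrite (RInt_ext_le _ (fun _ => h)) by
        (lra || (intros x Hx; simpl; destruct (Rlt_dec x (off + w)); [reflexivity | lra])).
      apply RInt_cst. }
    destruct (Rlt_dec l (off + w)).
    + rewrite Hfirst by lra.
      assert (h * (l - off) <= h * w) by (apply Rmult_le_compat_l; lra). lra.
    + rewrite <- (RInt_Chasles _ off (off + w) l) by apply place_integrable.
      rewrite Hfirst by lra.
      rewrite (RInt_ext_le _ (place bs (off + w)) (off + w) l) by
        (lra || (intros x Hx; simpl; destruct (Rlt_dec x (off + w)); [lra | reflexivity])).
      destruct (IH (off + w) l Hwf ltac:(lra)) as [Hle Hfull].
      unfold plus; simpl. replace (h * (off + w - off)) with (w * h) by ring.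
      split; [lra | intros; rewrite Hfull by lra; reflexivity].
Qed.

Lemma ins_In (b : R * R) (bs : list (R * R)) (x : R * R) :
  In x (ins b bs) <-> b = x \/ In x bs.
Proof.
  induction bs as [|c bs IH]; simpl; [tauto|].
  destruct (Rle_dec (snd c) (snd b)); simpl; [tauto|]. rewrite IH. tauto.
Qed.

Lemma isort_In (bs : list (R * R)) (x : R * R) : In x (isort bs) <-> In x bs.
Proof. induction bs as [|b bs IH]; simpl; [tauto|]. rewrite ins_In, IH. tauto. Qed.

Lemma area_ins (b : R * R) (bs : list (R * R)) : area (ins b bs) = fst b * snd b + area bs.
Proof.
  induction bs as [|c bs IH]; simpl; [reflexivity|].
  destruct (Rle_dec (snd c) (snd b)); [reflexivity|].
  change (fst c * snd c + area (ins b bs) = fst b * snd b + (fst c * snd c + area bs)).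
  rewrite IH. ring.
Qed.

Lemma area_isort (bs : list (R * R)) : area (isort bs) = area bs.
Proof. induction bs as [|b bs IH]; simpl; [reflexivity|]. now rewrite area_ins, IH. Qed.

Definition head_highest (bs : list (R * R)) : Prop :=
  match bs with
  | [] => True
  | c :: _ => forall y, In y bs -> snd y <= snd c
  end.

Lemma ins_head_highest (b : R * R) (bs : list (R * R)) :
  head_highest bs -> head_highest (ins b bs).
Proof.
  destruct bs as [|c bs]; simpl; intros H.
  - intros y [<-|[]]; lra.
  - destruct (Rle_dec (snd c) (snd b)); simpl.
    + intros y [<-|[<-|Hy]]; [lra | lra |]. specialize (H y (or_intror Hy)). lra.
    + intros y [<-|Hy]; [lra|]. apply ins_In in Hy as [<-|Hy]; [lra|].
      apply H; now right.
Qed.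

Lemma isort_head_highest (bs : list (R * R)) : head_highest (isort bs).
Proof. induction bs; simpl; [exact I | now apply ins_head_highest]. Qed.

Lemma sorted_first_block (bs : list (R * R)) :
  wf_blocks bs -> head_highest bs -> area bs = 1 ->
  exists w h rest, bs = (w, h) :: rest /\ 0 < w /\ 0 < h.
Proof.
  intros Hwf Htop Harea.
  destruct (area_pos_block bs Hwf ltac:(lra)) as [y [Hy Hypos]].
  destruct bs as [|[w h] rest]; [destruct Hy|].
  exists w, h, rest. split; [reflexivity|].
  destruct (Hwf (w, h) (or_introl eq_refl)) as [Hw _].
  pose proof (Htop y Hy). simpl in *. lra.
Qed.

(** ** The Gibbs rescaling *)

Lemma blocks_wf (kB T : R) (rho : state) :
  (forall p, In p rho -> 0 <= snd p) -> wf_blocks (blocks kB T rho).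
Proof.
  intros H b Hb. unfold blocks in Hb. apply in_flat_map in Hb as [lev [Hlev Hb]].
  unfold block in Hb. destruct (fst lev) as [E|]; simpl in Hb; [|destruct Hb].
  destruct Hb as [<-|[]]; simpl. split; [apply exp_pos|].
  apply Rmult_le_pos; [now apply H | left; apply exp_pos].
Qed.

Lemma area_app (bs cs : list (R * R)) : area (bs ++ cs) = area bs + area cs.
Proof.
  induction bs as [|b bs IH]; simpl; [change (area cs = 0 + area cs); ring|].
  change (fst b * snd b + area (bs ++ cs) = fst b * snd b + area bs + area cs).
  rewrite IH. ring.
Qed.

(* Each block has area lambda_i, so the total area is the total probability. *)
Lemma area_blocks (kB T : R) (rho : state) : 0 < kB -> 0 < T ->
  (forall p, In p rho -> fst p = None -> snd p = 0) ->
  area (blocks kB T rho) = fold_right (fun p s => snd p + s) 0 rho.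
Proof.
  intros HkB HT. induction rho as [|lev rho IH]; intros Hnone; [reflexivity|].
  unfold blocks; simpl. fold (blocks kB T rho). rewrite area_app, IH.
  2:{ intros p Hp. apply Hnone. now right. }
  f_equal. unfold block. destruct (fst lev) as [E|] eqn:HE; simpl.
  - replace (- E / (kB * T)) with (- (E / (kB * T))) by (field; lra).
    replace (snd lev) with (snd lev * (exp (- (E / (kB * T))) * exp (E / (kB * T)))) at 2
      by (rewrite <- exp_plus, Rplus_opp_l, exp_0; ring).
    ring.
  - symmetry. apply Hnone; [now left | exact HE].
Qed.

Lemma Gibbs_integrable (kB T : R) (rho : state) (a b : R) : ex_RInt (Gibbs kB T rho) a b.
Proof.
  revert a b. apply ex_RInt_glue with 0; intros a b Hab.
  - apply ex_RInt_ext_le with (fun _ => 0); [lra | | apply ex_RInt_const].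
    intros x Hx. unfold Gibbs. destruct (Rlt_dec x 0); [reflexivity | lra].
  - apply ex_RInt_ext_le with (place (isort (blocks kB T rho)) 0);
      [lra | | apply place_integrable].
    intros x Hx. unfold Gibbs. destruct (Rlt_dec x 0); [lra | reflexivity].
Qed.

(* The cumulative function of a Gibbs rescaling is a profile: the integrand is
   bounded, at least the height of the first (highest) block near 0, and the
   staircase has area 1. *)
Lemma Gibbs_profile (kB T : R) (rho : state) :
  0 < kB -> 0 < T -> is_state rho -> profile (cum (Gibbs kB T rho)).
Proof.
  intros HkB HT [Hnn [Hsum [Hnone _]]].
  set (bs := isort (blocks kB T rho)).
  pose proof (Gibbs_integrable kB T rho) as Hint.
  assert (Hwf : wf_blocks bs).
  { intros b Hb. apply (blocks_wf kB T rho Hnn). apply isort_In. exact Hb. }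
  assert (Harea : area bs = 1) by (unfold bs; rewrite area_isort, area_blocks; auto).
  assert (HG : forall x, 0 <= x -> Gibbs kB T rho x = place bs 0 x).
  { intros x Hx. unfold Gibbs. destruct (Rlt_dec x 0); [lra | reflexivity]. }
  assert (Hcum : forall l, 0 <= l -> cum (Gibbs kB T rho) l = RInt (place bs 0) 0 l).
  { intros l Hl. apply RInt_ext_le; [exact Hl|]. intros x Hx. apply HG; lra. }
  assert (Hbound : forall x, 0 <= Gibbs kB T rho x <= height_sum bs).
  { intros x. unfold Gibbs. destruct (Rlt_dec x 0).
    - pose proof (height_sum_nonneg bs Hwf). lra.
    - now apply place_bounds. }
  destruct (sorted_first_block bs Hwf (isort_head_highest _) Harea)
    as [w [h [rest [Hbs [Hw Hh]]]]].
  split.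
  - now apply cum_0.
  - exists (height_sum bs). split; [apply height_sum_nonneg, Hwf|].
    intros x y Hxy. apply cum_increment_upper; [exact Hint | lra |].
    intros z _. apply Hbound.
  - intros x y Hxy.
    assert (0 * (y - x) <= cum (Gibbs kB T rho) y - cum (Gibbs kB T rho) x).
    { apply cum_increment_lower; [exact Hint | lra |]. intros z _. apply Hbound. }
    lra.
  - exists h, (w / 2). split; [lra|]. split; [lra|]. intros x y Hxy Hyd.
    apply cum_increment_lower; [exact Hint | lra |]. intros z Hz.
    rewrite HG, Hbs by lra. simpl. destruct (Rlt_dec z (0 + w)); lra.
  - intros x Hx. rewrite Hcum, <- Harea by exact Hx.
    apply place_RInt; auto.
  - exists (total_width bs). split; [apply total_width_nonneg, Hwf|].
    intros x Hx. pose proof (total_width_nonneg bs Hwf).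
    rewrite Hcum, <- Harea by lra. apply place_RInt; auto; lra.
Qed.

Lemma M_Gibbs_max (kB T q : R) (rho sigma : state) :
  0 < kB -> 0 < T -> is_state rho -> is_state sigma -> 0 < q <= 1 ->
  let F := fun l => cum (Gibbs kB T rho) l / q in
  let Mv := M (fun x => Gibbs kB T rho x / q) (Gibbs kB T sigma) in
  admissible F (cum (Gibbs kB T sigma)) Mv /\
  forall m, admissible F (cum (Gibbs kB T sigma)) m -> m <= Mv.
Proof.
  intros HkB HT Hrho Hsigma Hq F Mv.
  destruct (admissible_max F (cum (Gibbs kB T sigma))) as [s [Hs Hmax]].
  - now apply Gibbs_profile.
  - apply profile_div_linearly_bounded; auto. now apply Gibbs_profile.
  - assert (HMv : Mv = s).
    { apply M_of_max.
      - apply ex_RInt_div, Gibbs_integrable.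
      - apply Gibbs_integrable.
      - rewrite cum_div by apply Gibbs_integrable. exact Hs.
      - rewrite cum_div by apply Gibbs_integrable. exact Hmax. }
    rewrite HMv. split; assumption.
Qed.

(** ** The work functional *)

(* W^0(B -> B) = 0: the maximal admissible rescaling of a profile against
   itself is 1. *)
Lemma W_self_zero (kB T : R) (B : state) :
  0 < kB -> 0 < T -> is_state B -> W kB T 0 B B = 0.
Proof.
  intros HkB HT HB. unfold W.
  destruct (M_Gibbs_max kB T (1 - 0) B B HkB HT HB HB ltac:(lra)) as [Hadm Hmax].
  set (P := cum (Gibbs kB T B)) in *.
  assert (HP : forall l, P l / (1 - 0) = P l) by (intros; field).
  assert (Hone : M (fun x => Gibbs kB T B x / (1 - 0)) (Gibbs kB T B) = 1).
  { apply Rle_antisym.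
    - apply (profile_self_le_1 P); [now apply Gibbs_profile|].
      apply admissible_weaken with (2 := Hadm). intros l _. rewrite HP. lra.
    - apply Hmax. split; [lra|]. intros l _. rewrite Rmult_1_r, HP. lra. }
  rewrite Hone, ln_1. ring.
Qed.

Lemma bernoulli (eps : R) (n : nat) : 0 <= eps <= 1 -> 1 - INR n * eps <= (1 - eps) ^ n.
Proof.
  intros He. induction n as [|n IH]; [simpl; lra|]. rewrite S_INR. simpl.
  assert ((1 - INR n * eps) * (1 - eps) <= (1 - eps) ^ n * (1 - eps))
    by (apply Rmult_le_compat_r; lra).
  pose proof (pos_INR n). nra.
Qed.

Lemma prod_f_R0_pos (f : nat -> R) (n : nat) :
  (forall i, (i <= n)%nat -> 0 < f i) -> 0 < prod_f_R0 f n.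
Proof.
  induction n as [|n IH]; intros H; simpl; [apply H; lia|].
  apply Rmult_lt_0_compat; [apply IH; intros; apply H | apply H]; lia.
Qed.

Lemma sum_ln_prod (c : R) (f : nat -> R) (n : nat) :
  (forall i, (i <= n)%nat -> 0 < f i) ->
  sum_f_R0 (fun i => c * ln (f i)) n = c * ln (prod_f_R0 f n).
Proof.
  induction n as [|n IH]; intros H; simpl; [reflexivity|].
  rewrite IH by (intros; apply H; lia).
  rewrite ln_mult; [ring | apply prod_f_R0_pos; intros; apply H; lia | apply H; lia].
Qed.

(* The cyclic inequality: chaining the maximal rescalings M_i around the cycle
   gives a rescaling admissible for P_{A_0} / (1 - m eps) against P_{A_0}. *)
Lemma cyclic_inequality (kB T : R) (m : nat) (A : nat -> state) (eps : R) :
  0 < kB -> 0 < T -> (1 <= m)%nat ->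
  (forall i, (i < m)%nat -> is_state (A i)) ->
  0 <= eps -> INR m * eps < 1 ->
  sum_f_R0 (fun i => W kB T eps (A i) (A (S i mod m)%nat)) (m - 1)
    <= W kB T (INR m * eps) (A 0%nat) (A 0%nat).
Proof.
  intros HkB HT Hm HA He Hme.
  destruct m as [|n]; [lia|]. replace (S n - 1)%nat with n by lia.
  assert (Hm1 : 1 <= INR (S n)) by (apply (le_INR 1); lia).
  set (s := 1 - eps).
  assert (Hs : 0 < s <= 1) by (unfold s; nra).
  assert (Hq : 0 < 1 - INR (S n) * eps <= s ^ S n) by (split; [lra | apply bernoulli; nra]).
  set (Q := fun k l => cum (Gibbs kB T (A (k mod S n)%nat)) l).
  set (Mi := fun i => M (fun x => Gibbs kB T (A i) x / s) (Gibbs kB T (A (S i mod S n)%nat))).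
  assert (Hstep : forall k, (k <= n)%nat ->
            admissible (fun l => Q k l / s) (Q (S k)) (Mi k)).
  { intros k Hk. unfold Q, Mi. rewrite (Nat.mod_small k) by lia.
    apply M_Gibbs_max; auto; apply HA; [lia | apply Nat.mod_upper_bound; lia]. }
  pose proof (admissible_chain Q Mi s n (proj1 Hs) Hstep) as Hchain.
  unfold Q in Hchain. rewrite Nat.Div0.mod_0_l, Nat.Div0.mod_same in Hchain.
  assert (HA0 : is_state (A 0%nat)) by (apply HA; lia).
  destruct (M_Gibbs_max kB T (1 - INR (S n) * eps) (A 0%nat) (A 0%nat) HkB HT HA0 HA0
              ltac:(nra)) as [_ Hmax].
  assert (Hprod : prod_f_R0 Mi n
                  <= M (fun x => Gibbs kB T (A 0%nat) x / (1 - INR (S n) * eps))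
                       (Gibbs kB T (A 0%nat))).
  { apply Hmax. apply admissible_weaken with (2 := Hchain). intros l Hl.
    pose proof (profile_nonneg _ (Gibbs_profile kB T (A 0%nat) HkB HT HA0) l Hl).
    unfold Rdiv. apply Rmult_le_compat_l; auto. apply Rinv_le_contravar; lra. }
  unfold W. change (sum_f_R0 (fun i => kB * T * ln (Mi i)) n <=
    kB * T * ln (M (fun x => Gibbs kB T (A 0%nat) x / (1 - INR (S n) * eps))
                   (Gibbs kB T (A 0%nat)))).
  assert (Hpos : forall i, (i <= n)%nat -> 0 < Mi i) by (intros i Hi; apply (Hstep i Hi)).
  rewrite sum_ln_prod by exact Hpos.
  apply Rmult_le_compat_l; [nra|].
  apply ln_le; [apply prod_f_R0_pos, Hpos | exact Hprod].
Qed.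

Theorem mainTheorem4 (kB T : R) (HkB : 0 < kB) (HT : 0 < T)
  (m : nat) (A : nat -> state) (eps : R) :
  (1 <= m)%nat ->
  (forall i, (i < m)%nat -> is_state (A i)) ->
  0 <= eps -> INR m * eps < 1 ->
  sum_f_R0 (fun i => W kB T eps (A i) (A (S i mod m)%nat)) (m - 1)
    <= W kB T (INR m * eps) (A 0%nat) (A 0%nat)
  /\ (forall B : state, is_state B -> W kB T 0 B B = 0)
  /\ (eps = 0 ->
      sum_f_R0 (fun i => W kB T eps (A i) (A (S i mod m)%nat)) (m - 1) <= 0).
Proof.
  intros Hm HA He Hme.
  pose proof (cyclic_inequality kB T m A eps HkB HT Hm HA He Hme) as Hcyc.
  split; [exact Hcyc|]. split.
  - intros B HB. now apply W_self_zero.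
  - intros ->. rewrite Rmult_0_r, W_self_zero in Hcyc by (assumption || (apply HA; lia)).
    exact Hcyc.
Qed.
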